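(* Fix a stream index $m\in\{1,\dots,M\}$ and write $n=N_r-M+1$. Let $R_{m,1},\dots,R_{m,K}>0$ be given transmission rates and let $\phi_{m,1},\dots,\phi_{m,K}>0$ be the constants defined in the context. Consider the optimization problem \[ \min_{\{\zeta_{m,k}\},\{\theta_{m,k}\}}\ \sum_{m=1}^M\sum_{k=1}^K \phi_{m,k}R_{m,k}\,\theta_{m,k}^{-n} \] subject to $\sum_{k=1}^K\zeta_{m,k}=\frac1M$ for all $m$; $\zeta_{m,k}>0$ and $\theta_{m,k}>0$ for all $m,k$; and $\theta_{m,k}\le \frac{\zeta_{m,i}}{2^{R_{m,i}}-1}-\sum_{l=1}^{i-1}\zeta_{m,l}$ for all $m$, all $k\in\{1,\dots,K\}$ and all $i\in\{k,\dots,K\}$. Define the $K\times K$ upper triangular matrix $\mathbf U_m$ with diagonal entries $[\mathbf U_m]_{kk}=\frac{1}{2^{R_{m,k}}-1}$, entries $[\mathbf U_m]_{ij}=-1$ for $i<j$, and $[\mathbf U_m]_{ij}=0$ for $i>j$; let $\mathbf L_m=\mathbf U_m^{\mathrm T}$. Let $\mathbf 1_K$ be the $K\times1$ all-ones vector, $\mathbf e_k$ the $k$-th standard basis column vector, and \[ \mathbf b_m=\left(\left(\frac{n\,\phi_{m,1}R_{m,1}}{\mathbf e_1^{\mathrm T}\mathbf U_m^{-1}\mathbf 1_K}\right)^{\frac{1}{n+1}},\dots,\left(\frac{n\,\phi_{m,K}R_{m,K}}{\mathbf e_K^{\mathrm T}\mathbf U_m^{-1}\mathbf 1_K}\right)^{\frac{1}{n+1}}\right)^{\mathrm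 T}. \] Then the optimal power allocation coefficients $\boldsymbol\zeta_m^*=(\zeta_{m,1}^*,\dots,\zeta_{m,K}^* )^{\mathrm T}$ are \[ \boldsymbol\zeta_m^*=\frac{\mathbf L_m^{-1}\mathbf b_m}{M\,\mathbf 1_K^{\mathrm T}\mathbf L_m^{-1}\mathbf b_m}, \] and the optimal $\theta_{m,k}^*$ are \[ \theta_{m,k}^*=\frac{\zeta_{m,k}^*}{2^{R_{m,k}}-1}-\sum_{l=1}^{k-1}\zeta_{m,l}^*=\frac{\mathbf a_{m,k}^{\mathrm T}\mathbf L_m^{-1}\mathbf b_m}{M\,\mathbf 1_K^{\mathrm T}\mathbf L_m^{-1}\mathbf b_m}, \] where $\mathbf a_{m,k}=(\underbrace{-1,\dots,-1}_{k-1},\frac{1}{2^{R_{m,k}}-1},\underbrace{0,\dots,0}_{K-k})^{\mathrm T}$.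
   Context: Setting: a base station with $N_t$ antennas serves $K$ clusters, each of $N_r$ single-antenna devices, each cluster requesting $M\le\min(N_t,N_r)$ data streams; $M,N_r,N_t,K$ are positive integers. $\mathbf R_t$ ($N_t\times N_t$) and $\mathbf R_r$ ($N_r\times N_r$) are Hermitian positive definite correlation matrices; $\lambda_1,\dots,\lambda_{N_r}$ are the eigenvalues of $\mathbf R_r$. $\mathbf V\in\mathbb C^{N_t\times M}$ has unit-norm columns and $\mathbf R_{t'}=\mathbf V^{\mathrm H}\mathbf R_t\mathbf V$ (assumed invertible). $\bar\gamma>0$ is the transmit SNR, and the path loss to cluster $k$ is $\mathcal K d_k^{-\alpha}$ with $\mathcal K>0$, $\alpha\ge2$, $d_1\le\dots\le d_K$. Let $W$ be the $N_r\times N_r$ matrix with $(i,j)$ entry $\lambda_i^{N_r-j}$ and $D$ the matrix obtained from $W$ by replacing its first column by $(\lambda_i^{M-2}\ln\lambda_i)_{i=1}^{N_r}$. The constants are \[ \phi_{m,k}=\frac{1}{N_r!\det(\mathbf R_r)}\left(\frac{[\mathbf R_{t'}^{-1}]_{mm}}{\bar\gamma\,\mathcal K d_k^{-\alpha}}\right)^{N_r}\quad (M=1), \] \[ \phi_{m,k}=\frac{(-1)^{N_r-M}(N_r-1)!\det D}{(N_r-M)!\,(N_r-M+1)!\,(M-2)!\,\det W}\left(\frac{[\mathbf R_{t'}^{-1}]_{mm}}{\bar\gamma\,\mathcal K d_k^{-\alpha}}\right)^{N_r-M+1}\quad (M>1). \] (They are the coefficients of the asymptotic outage probability $p^{out}_{m,k}\simeq\phi_{m,k}\theta_{m,k}^{-(N_r-M+1)}$.)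 *)

From HB Require Import structures.
From mathcomp Require Import all_boot all_order all_algebra.
From mathcomp Require Import reals exp.
From mathcomp Require Import complex.
Set Implicit Arguments. Unset Strict Implicit. Unset Printing Implicit Defensive.
Import Order.TTheory GRing.Theory Num.Theory.
Local Open Scope ring_scope.


Section Defs.
Variable R : realType.
Local Notation C := R[i].

Definition ctr {m n : nat} (A : 'M[C]_(m, n)) : 'M[C]_(n, m) :=
  map_mx (@conjc R) A^T.

Definition hermitian {n : nat} (A : 'M[C]_n) : Prop := ctr A = A.

Definition herm_pd {n : nat} (A : 'M[C]_n) : Prop :=
  hermitian A /\
  forall v : 'cV[C]_n, v != 0 -> 0 < complex.Re ((ctr v *m A *m v) 0 0).

Definition eigenvalues_of {n : nat} (A : 'M[C]_n) (lam : 'I_n -> R) : Prop :=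
  char_poly A = \prod_(i < n) ('X - ((lam i)%:C)%C%:P).

(* W: (i,j) entry lam_i^(Nr - j) (1-indexed j); 0-indexed: lam_i^(Nr-1-j) *)
Definition Wmx (Nr : nat) (lam : 'I_Nr -> R) : 'M[R]_Nr :=
  \matrix_(i < Nr, j < Nr) lam i ^+ (Nr - 1 - j).

Definition Dmx (Nr M : nat) (lam : 'I_Nr -> R) : 'M[R]_Nr :=
  \matrix_(i < Nr, j < Nr)
     if j == 0%N :> nat then lam i ^+ (M - 2) * ln (lam i)
     else lam i ^+ (Nr - 1 - j).

Definition Rtp {Nt M : nat} (Rt : 'M[C]_Nt) (V : 'M[C]_(Nt, M)) : 'M[C]_M :=
  ctr V *m Rt *m V.

Definition phi (Nt Nr M K : nat) (Rt : 'M[C]_Nt) (Rr : 'M[C]_Nr)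
  (lam : 'I_Nr -> R) (V : 'M[C]_(Nt, M)) (gam Kc alpha : R) (d : 'I_K -> R)
  (m : 'I_M) (k : 'I_K) : R :=
  let c := complex.Re ((invmx (Rtp Rt V)) m m) / (gam * (Kc * powR (d k) (- alpha))) in
  if M == 1%N then
    1 / ((Nr`!)%:R * complex.Re (\det Rr)) * c ^+ Nr
  else
    ((-1) ^+ (Nr - M) * (Nr.-1)`!%:R * \det (Dmx M lam)) /
    ((Nr - M)`!%:R * (Nr - M).+1`!%:R * (M - 2)`!%:R * \det (Wmx lam))
    * c ^+ (Nr - M + 1).

Definition tw (r : R) : R := powR 2 r - 1.

Definition Umx (K : nat) (rate : 'I_K -> R) : 'M[R]_K :=
  \matrix_(i < K, j < K)
     if i == j then 1 / tw (rate i) else if (i < j)%N then -1 else 0.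

Definition Lmx (K : nat) (rate : 'I_K -> R) : 'M[R]_K := (Umx rate)^T.

Definition ones (K : nat) : 'cV[R]_K := const_mx 1.

Definition bvec (K n : nat) (ph rate : 'I_K -> R) : 'cV[R]_K :=
  \col_(k < K)
    powR ((n%:R * ph k * rate k) / ((invmx (Umx rate) *m ones K) k 0))
         (1 / (n.+1)%:R).

Definition avec (K : nat) (rate : 'I_K -> R) (k : 'I_K) : 'cV[R]_K :=
  \col_(l < K) if (l < k)%N then -1 else if l == k then 1 / tw (rate k) else 0.

Definition feasible (M K : nat) (rate : 'I_M -> 'I_K -> R)
  (zeta theta : 'I_M -> 'I_K -> R) : Prop :=
  (forall m, \sum_(k < K) zeta m k = 1 / M%:R) /\
  (forall m k, 0 < zeta m k) /\
  (forall m k, 0 < theta m k) /\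
  (forall m (k i : 'I_K), (k <= i)%N ->
     theta m k <= zeta m i / tw (rate m i) - \sum_(l < K | (l < i)%N) zeta m l).

Definition objective (M K n : nat) (ph rate : 'I_M -> 'I_K -> R)
  (theta : 'I_M -> 'I_K -> R) : R :=
  \sum_(m < M) \sum_(k < K) ph m k * rate m k * (theta m k) ^- n.

Definition den (M K n : nat) (ph rate : 'I_K -> R) : R :=
  M%:R * ((ones K)^T *m invmx (Lmx rate) *m bvec n ph rate) 0 0.

Definition zstar (M K n : nat) (ph rate : 'I_M -> 'I_K -> R) (m : 'I_M) (k : 'I_K) : R :=
  (invmx (Lmx (rate m)) *m bvec n (ph m) (rate m)) k 0 / den M n (ph m) (rate m).

Definition tstar (M K n : nat) (ph rate : 'I_M -> 'I_K -> R) (m : 'I_M) (k : 'I_K) : R :=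
  zstar n ph rate m k / tw (rate m k) - \sum_(l < K | (l < k)%N) zstar n ph rate m l.

End Defs.

(* Let w := U^{-1} 1.  Since L = U^T, w^T L zeta = 1^T zeta, so every feasible
   theta satisfies sum_k w_k theta_k <= 1/M, with equality at
   theta* = L zeta* = b / D, where D = M 1^T L^{-1} b.  The vector b is chosen so
   that the gradient of the convex objective at theta* is proportional to w:
   n phi_k R_k theta*_k^{-(n+1)} = D^{n+1} w_k, and the tangent-line inequality
   for x^{-n} gives optimality.  The constraints with i > k hold at theta* because
   b is nondecreasing: phi_{m,k} increases with d_k, and R_k / w_k increases in k
   since w_k = (2^{R_k} - 1) (1 + sum_{l>k} w_l) and
   x ln 2 <= 2^x - 1 <= x ln 2 2^x. *)

From HB Require Import structures.
From mathcomp Require Import all_boot all_order all_algebra.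
From mathcomp Require Import reals sequences exp.
From mathcomp Require Import complex.
From mathcomp Require Import ring lra zify.
Set Implicit Arguments. Unset Strict Implicit. Unset Printing Implicit Defensive.
Import Order.TTheory GRing.Theory Num.Theory.
Local Open Scope ring_scope.

Lemma bernoulli_ineq (R : realFieldType) (u : R) n :
  0 <= u -> 1 + n%:R * (u - 1) <= u ^+ n.
Proof.
move=> u_ge0; elim: n => [|n IH]; first by rewrite mul0r addr0 expr0.
have := ler_wpM2l u_ge0 IH.
have := mulr_ge0 (ler0n R n) (sqr_ge0 (u - 1)).
rewrite [u ^+ n.+1]exprS -natr1 => h1 h2.
set N := n%:R in h1 h2 *; set P := u ^+ n in h2 *; nra.
Qed.

Lemma expfV_tangent (R : realFieldType) (s t : R) n : 0 < s -> 0 < t ->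
  s ^- n - t ^- n <= n%:R * s ^- n.+1 * (t - s).
Proof.
move=> s_gt0 t_gt0; rewrite -subr_ge0.
have := bernoulli_ineq n.+1 (divr_ge0 (ltW s_gt0) (ltW t_gt0)).
rewrite -subr_ge0 => /(mulr_ge0 (divr_ge0 (ltW t_gt0) (exprn_ge0 n.+1 (ltW s_gt0)))).
congr (_ <= _).
rewrite exprMn exprVn -natr1 !exprS.
by field; rewrite !gt_eqF // exprn_gt0.
Qed.

Section RateCoefficient.
Variable R : realType.

Lemma ln2_gt0 : 0 < ln (2 : R).
Proof. by rewrite ln_gt0 // ltr1n. Qed.

Lemma powR2E (x : R) : powR 2 x = expR (x * ln 2).
Proof. by rewrite /powR pnatr_eq0. Qed.

Lemma tw_ge_mul_ln2 (x : R) : x * ln 2 <= tw x.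
Proof. by rewrite /tw powR2E; have := expR_ge1Dx (x * ln 2); lra. Qed.

Lemma tw_le_mul_ln2 (x : R) : tw x <= x * ln 2 * powR 2 x.
Proof.
rewrite /tw powR2E; have := expR_ge1Dx (- (x * ln 2)).
rewrite expRN => /(ler_wpM2r (ltW (expR_gt0 (x * ln 2)))).
by rewrite mulVf ?gt_eqF ?expR_gt0 //; lra.
Qed.

Lemma tw_gt0 (x : R) : 0 < x -> 0 < tw x.
Proof. by move=> x_gt0; apply: lt_le_trans (tw_ge_mul_ln2 x); rewrite mulr_gt0 ?ln2_gt0. Qed.

Lemma mul_tw_le (x y : R) : 0 <= x -> 0 <= y -> y * tw x <= x * tw y * powR 2 x.
Proof.
move=> x_ge0 y_ge0; apply: le_trans (ler_wpM2l y_ge0 (tw_le_mul_ln2 x)) _.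
have := ler_wpM2l (mulr_ge0 x_ge0 (powR_ge0 2 x)) (tw_ge_mul_ln2 y).
set a := ln 2; set p := powR 2 x; set t := tw y; lra.
Qed.

End RateCoefficient.

Section TriangularSystem.
Variables (R : realType) (K : nat) (r : 'I_K -> R).
Hypothesis r_gt0 : forall k, 0 < r k.

Local Notation c k := (tw (r k)).

Let c_gt0 k : 0 < c k. Proof. exact: tw_gt0. Qed.

Lemma Lmx_mulE (y : 'cV[R]_K) k :
  (Lmx r *m y) k 0 = y k 0 / c k - \sum_(l < K | (l < k)%N) y l 0.
Proof.
rewrite mxE (bigD1 k) //= !mxE eqxx mul1r mulrC; congr (_ + _).
rewrite -sumrN big_mkcond [RHS]big_mkcond /=; apply: eq_bigr => j _.
rewrite !mxE; case: (eqVneq j k) => [->|_] /=; first by rewrite ltnn.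
by case: ifP => _; rewrite ?mulN1r ?mul0r ?oppr0.
Qed.

Lemma Umx_mulE (y : 'cV[R]_K) k :
  (Umx r *m y) k 0 = y k 0 / c k - \sum_(l < K | (k < l)%N) y l 0.
Proof.
rewrite mxE (bigD1 k) //= !mxE eqxx mul1r mulrC; congr (_ + _).
rewrite -sumrN big_mkcond [RHS]big_mkcond /=; apply: eq_bigr => j _.
rewrite !mxE; case: (eqVneq j k) => [->|_] /=; first by rewrite ltnn.
by case: ifP => _; rewrite ?mulN1r ?mul0r ?oppr0.
Qed.

Lemma Lmx_unit : Lmx r \in unitmx.
Proof.
rewrite unitmxE det_trig; last first.
  apply/is_trig_mxP => i j ij; rewrite !mxE.
  by case: eqVneq => [ji|_]; [rewrite ji ltnn in ij | rewrite ltnNge (ltnW ij)].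
rewrite unitfE prodf_seq_neq0; apply/allP => i _ /=.
by rewrite !mxE eqxx mul1r invr_eq0 gt_eqF.
Qed.

Lemma Umx_unit : Umx r \in unitmx.
Proof. by rewrite -unitmx_tr Lmx_unit. Qed.

Lemma invLmx_mulE (b : 'cV[R]_K) k :
  (invmx (Lmx r) *m b) k 0 =
  c k * (b k 0 + \sum_(l < K | (l < k)%N) (invmx (Lmx r) *m b) l 0).
Proof.
have := congr1 (fun y : 'cV[R]_K => y k 0) (mulKVmx Lmx_unit b).
by rewrite /= Lmx_mulE => <-; field; rewrite gt_eqF.
Qed.

Lemma invLmx_mul_gt0 (b : 'cV[R]_K) k : (forall l, 0 < b l 0) ->
  0 < (invmx (Lmx r) *m b) k 0.
Proof.
move=> b_gt0; have [j] := ubnP k; elim: j k => // j IH k k_lt.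
rewrite invLmx_mulE mulr_gt0 // ltr_wpDr ?b_gt0 //.
by apply: sumr_ge0 => l lk; rewrite ltW // IH //; lia.
Qed.

Definition weights : 'cV[R]_K := invmx (Umx r) *m ones R K.

Local Notation w := weights.
Local Notation tail k := (\sum_(l < K | (k < l)%N) w l 0).

Lemma weightsE k : w k 0 = c k * (1 + tail k).
Proof.
have := congr1 (fun y : 'cV[R]_K => y k 0) (mulKVmx Umx_unit (ones R K)).
have -> : ones R K k 0 = 1 by rewrite mxE.
by rewrite /= Umx_mulE -/w => <-; field; rewrite gt_eqF.
Qed.

Lemma weights_gt0 k : 0 < w k 0.
Proof.
have [j] := ubnP (K - k); elim: j k => // j IH k k_lt.
rewrite weightsE mulr_gt0 // ltr_wpDr //.
apply: sumr_ge0 => l kl; rewrite ltW // IH //.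
by have := ltn_ord l; lia.
Qed.

Lemma trmx_weights_Lmx : w^T *m Lmx r = (ones R K)^T.
Proof. by rewrite -trmx_mul mulKVmx ?Umx_unit. Qed.

Lemma weights_dot_Lmx (y : 'cV[R]_K) : \sum_k w k 0 * (Lmx r *m y) k 0 = \sum_k y k 0.
Proof.
transitivity ((w^T *m (Lmx r *m y)) 0 0).
  by rewrite [RHS]mxE; apply: eq_bigr => j _; rewrite [w^T 0 j]mxE.
by rewrite mulmxA trmx_weights_Lmx mxE; apply: eq_bigr => j _; rewrite !mxE mul1r.
Qed.

Lemma ones_invLmx_mulE (b : 'cV[R]_K) :
  ((ones R K)^T *m invmx (Lmx r) *m b) 0 0 = \sum_k w k 0 * b k 0.
Proof.
rewrite -mulmxA -[in RHS](mulKVmx Lmx_unit b) weights_dot_Lmx mxE.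
by apply: eq_bigr => j _; rewrite !mxE mul1r.
Qed.

Lemma avec_invLmx_mulE (y : 'cV[R]_K) k :
  ((avec r k)^T *m invmx (Lmx r) *m y) 0 0 = y k 0.
Proof.
have -> : (avec r k)^T = row k (Lmx r).
  by apply/matrixP => i j; rewrite !mxE; case: (eqVneq j k) => [->|]; rewrite ?ltnn.
by rewrite -mulmxA -row_mul mulKVmx ?Lmx_unit // mxE.
Qed.

Lemma tail_step (k i : 'I_K) : (k < i)%N -> (1 + tail i) * powR 2 (r i) <= 1 + tail k.
Proof.
move=> ki; have -> : powR 2 (r i) = 1 + c i by rewrite /tw; ring.
rewrite mulrDr mulr1 -addrA lerD2l mulrC -weightsE.
rewrite [X in _ <= X](bigID (fun l : 'I_K => (i < l)%N)) /=.
have -> : \sum_(l < K | (k < l)%N && (i < l)%N) w l 0 = tail i.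
  by apply: eq_bigl => l; rewrite andb_idl // => /(ltn_trans ki).
rewrite lerD2l (bigD1 i) ?ki ?ltnn //= lerDl.
by apply: sumr_ge0 => l _; rewrite ltW ?weights_gt0.
Qed.

Lemma rate_div_weights_mono (k i : 'I_K) : (k <= i)%N -> r k / w k 0 <= r i / w i 0.
Proof.
rewrite leq_eqVlt => /orP[/eqP/val_inj -> //|ki].
rewrite ler_pdivrMr ?weights_gt0 // mulrAC ler_pdivlMr ?weights_gt0 //.
rewrite !weightsE !mulrA.
have tail_ge0 : 0 <= 1 + tail i by rewrite addr_ge0 // sumr_ge0 // => l _; rewrite ltW ?weights_gt0.
apply: le_trans (ler_wpM2r tail_ge0 (mul_tw_le (ltW (r_gt0 i)) (ltW (r_gt0 k)))) _.
by rewrite -!mulrA !ler_pM2l // mulrC tail_step.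
Qed.

End TriangularSystem.

Section SingleStream.
Variables (R : realType) (K : nat) (r ph : 'I_K -> R) (n M : nat).
Hypotheses (r_gt0 : forall k, 0 < r k) (ph_gt0 : forall k, 0 < ph k).
Hypothesis ph_mono : forall k i : 'I_K, (k <= i)%N -> ph k <= ph i.
Hypotheses (n_gt0 : (0 < n)%N) (M_gt0 : (0 < M)%N) (K_gt0 : (0 < K)%N).

Local Notation w := (weights r).
Local Notation b := (bvec n ph r).
Local Notation x := (invmx (Lmx r) *m bvec n ph r).
Local Notation D := (den M n ph r).

Let bvecE k : b k 0 = powR (n%:R * ph k * r k / w k 0) (1 / n.+1%:R).
Proof. by rewrite mxE. Qed.

Let base_gt0 k : 0 < n%:R * ph k * r k / w k 0.
Proof. by rewrite !mulr_gt0 ?ltr0n ?invr_gt0 ?weights_gt0. Qed.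

Lemma bvec_gt0 k : 0 < b k 0.
Proof. by rewrite bvecE powR_gt0. Qed.

Lemma bvec_expr k : b k 0 ^+ n.+1 = n%:R * ph k * r k / w k 0.
Proof.
rewrite bvecE -powR_mulrn ?powR_ge0 // -powRrM mul1r mulVf ?powRr1 ?ltW //.
by rewrite pnatr_eq0.
Qed.

Lemma bvec_mono (k i : 'I_K) : (k <= i)%N -> b k 0 <= b i 0.
Proof.
move=> ki; rewrite !bvecE; apply: ge0_ler_powR; rewrite ?nnegrE ?(ltW (base_gt0 _)) //.
  by rewrite divr_ge0 ?ler0n.
rewrite -!mulrA ler_wpM2l ?ler0n //; apply: ler_pM.
- exact: ltW.
- by rewrite divr_ge0 ?ltW ?weights_gt0.
- exact: ph_mono.
- exact: rate_div_weights_mono.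
Qed.

Lemma den_E : D = M%:R * \sum_k w k 0 * b k 0.
Proof. by rewrite /den ones_invLmx_mulE. Qed.

Lemma sum_weights_bvec_gt0 : 0 < \sum_k w k 0 * b k 0.
Proof.
rewrite (bigD1 (Ordinal K_gt0)) //= ltr_pwDl ?mulr_gt0 ?weights_gt0 ?bvec_gt0 //.
by rewrite sumr_ge0 // => l _; rewrite mulr_ge0 ?ltW ?weights_gt0 ?bvec_gt0.
Qed.

Lemma den_gt0 : 0 < D.
Proof. by rewrite den_E mulr_gt0 ?ltr0n ?sum_weights_bvec_gt0. Qed.

Lemma sum_weights_tstar : \sum_k w k 0 * (b k 0 / D) = 1 / M%:R.
Proof.
under eq_bigr do rewrite mulrA.
have := sum_weights_bvec_gt0; rewrite -mulr_suml den_E => /gt_eqF S_neq0.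
by field; rewrite S_neq0 pnatr_eq0 -lt0n M_gt0.
Qed.

Lemma Lmx_zstar k :
  (x k 0 / D) / tw (r k) - \sum_(l < K | (l < k)%N) x l 0 / D = b k 0 / D.
Proof.
rewrite -mulr_suml -[b in RHS](mulKVmx (Lmx_unit r_gt0)) Lmx_mulE //.
by rewrite mulrBl mulrAC.
Qed.

Lemma sum_zstar : \sum_k x k 0 / D = 1 / M%:R.
Proof.
rewrite -sum_weights_tstar -mulr_suml -(weights_dot_Lmx r_gt0) mulKVmx ?Lmx_unit //.
by rewrite mulr_suml; apply: eq_bigr => k _; rewrite mulrA.
Qed.

Lemma objective_gradient_tstar k :
  ph k * r k * (n%:R * (b k 0 / D) ^- n.+1) = D ^+ n.+1 * w k 0.
Proof.
rewrite exprMn exprVn invfM invrK bvec_expr.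
have := weights_gt0 r_gt0 k; have := ph_gt0 k; have := r_gt0 k.
move=> /gt_eqF r_neq0 /gt_eqF ph_neq0 /gt_eqF w_neq0.
by field; rewrite r_neq0 ph_neq0 w_neq0 pnatr_eq0 -lt0n n_gt0.
Qed.

Lemma objective_min (zeta theta : 'I_K -> R) :
  \sum_k zeta k = 1 / M%:R -> (forall k, 0 < theta k) ->
  (forall k, theta k <= zeta k / tw (r k) - \sum_(l < K | (l < k)%N) zeta l) ->
  \sum_k ph k * r k * (b k 0 / D) ^- n <= \sum_k ph k * r k * theta k ^- n.
Proof.
move=> sum_zeta theta_gt0 theta_le.
have sum_weights_theta : \sum_k w k 0 * theta k <= 1 / M%:R.
  rewrite -sum_zeta.
  have -> : \sum_k zeta k = \sum_k (\col_k zeta k) k 0 by apply: eq_bigr => k _; rewrite mxE.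
  rewrite -(weights_dot_Lmx r_gt0).
  apply: ler_sum => k _; apply: ler_wpM2l; first exact/ltW/weights_gt0.
  by rewrite Lmx_mulE // mxE; under eq_bigr do rewrite mxE; exact: theta_le.
have tangent k : ph k * r k * (b k 0 / D) ^- n - ph k * r k * theta k ^- n <=
                 D ^+ n.+1 * (w k 0 * theta k - w k 0 * (b k 0 / D)).
  rewrite -!mulrBr mulrA -objective_gradient_tstar -mulrA.
  apply: ler_wpM2l; first by rewrite mulr_ge0 ?ltW.
  exact/expfV_tangent/theta_gt0/divr_gt0/den_gt0/bvec_gt0.
rewrite -subr_ge0 -opprB oppr_ge0 -sumrB.
apply: le_trans (ler_sum _ (fun k _ => tangent k)) _.
rewrite -mulr_sumr sumrB sum_weights_tstar mulr_ge0_le0 ?subr_le0 //.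
by rewrite exprn_ge0 // ltW // den_gt0.
Qed.

End SingleStream.

Lemma ler_scaled_exprM (R : realFieldType) (A q g g' : R) p : 0 < g -> g <= g' ->
  0 < A * (q * g) ^+ p -> A * (q * g) ^+ p <= A * (q * g') ^+ p.
Proof.
move=> g_gt0 g_le; rewrite !exprMn !mulrA => lhs_gt0.
have Aq_gt0 : 0 < A * q ^+ p by rewrite -(pmulr_lgt0 _ (exprn_gt0 p g_gt0)).
apply: ler_wpM2l; first exact: ltW.
by apply: lerXn2r => //; rewrite nnegrE ltW // (lt_le_trans g_gt0).
Qed.

Lemma phi_mono (R : realType) (Nt Nr M K : nat) (Rt : 'M[R[i]]_Nt) (Rr : 'M[R[i]]_Nr)
  (lam : 'I_Nr -> R) (V : 'M[R[i]]_(Nt, M)) (gam Kc alpha : R) (d : 'I_K -> R) m :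
  0 < gam -> 0 < Kc -> 0 <= alpha -> (forall k, 0 < d k) ->
  (forall k l : 'I_K, (k <= l)%N -> d k <= d l) ->
  (forall k, 0 < phi Rt Rr lam V gam Kc alpha d m k) ->
  forall k i : 'I_K, (k <= i)%N ->
  phi Rt Rr lam V gam Kc alpha d m k <= phi Rt Rr lam V gam Kc alpha d m i.
Proof.
move=> gam_gt0 Kc_gt0 alpha_ge0 d_gt0 d_mono phi_gt0 k i ki.
have gain_le : (gam * (Kc * powR (d k) (- alpha)))^-1 <= (gam * (Kc * powR (d i) (- alpha)))^-1.
  rewrite !powRN !invfM !invrK !ler_pM2l ?invr_gt0 //.
  by apply: ge0_ler_powR; rewrite ?nnegrE ?d_mono // ltW.
have gain_gt0 : 0 < (gam * (Kc * powR (d k) (- alpha)))^-1.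
  by rewrite invr_gt0 !mulr_gt0 ?powR_gt0.
by move: (phi_gt0 k); rewrite /phi /=; case: ifP => _; apply: ler_scaled_exprM.
Qed.

Theorem theorem1 (R : realType) (Nt Nr M K : nat)
  (HNt : (0 < Nt)%N) (HNr : (0 < Nr)%N) (HM : (0 < M)%N) (HK : (0 < K)%N)
  (HMle : (M <= minn Nt Nr)%N)
  (Rt : 'M[R[i]]_Nt) (Rr : 'M[R[i]]_Nr)
  (HRt : herm_pd Rt) (HRr : herm_pd Rr)
  (lam : 'I_Nr -> R) (Hlam : eigenvalues_of Rr lam)
  (V : 'M[R[i]]_(Nt, M))
  (HV : forall j : 'I_M, \sum_(i < Nt) V i j * conjc (V i j) = 1)
  (HRtp : Rtp Rt V \in unitmx)
  (gam Kc alpha : R) (Hgam : 0 < gam) (HKc : 0 < Kc) (Halpha : 2 <= alpha)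
  (d : 'I_K -> R) (Hd : forall k, 0 < d k)
  (Hdsort : forall k l : 'I_K, (k <= l)%N -> d k <= d l)
  (rate : 'I_M -> 'I_K -> R) (Hrate : forall m k, 0 < rate m k)
  (Hphi : forall m k, 0 < phi Rt Rr lam V gam Kc alpha d m k) :
  let ph := phi Rt Rr lam V gam Kc alpha d in
  let n := (Nr - M + 1)%N in
  feasible rate (zstar n ph rate) (tstar n ph rate) /\
  (forall zeta theta : 'I_M -> 'I_K -> R, feasible rate zeta theta ->
     objective n ph rate (tstar n ph rate) <= objective n ph rate theta) /\
  (forall (m : 'I_M) (k : 'I_K),
     tstar n ph rate m k =
     ((avec (rate m) k)^T *m invmx (Lmx (rate m)) *m bvec n (ph m) (rate m)) 0 0
       / den M n (ph m) (rate m)).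
Proof.
move=> ph n.
have n_gt0 : (0 < n)%N by rewrite /n addn1.
have ph_mono m : forall k i : 'I_K, (k <= i)%N -> ph m k <= ph m i.
  by apply: phi_mono => //; apply: le_trans Halpha.
have D_gt0 m : 0 < den M n (ph m) (rate m) := den_gt0 (Hrate m) (Hphi m) n_gt0 HM HK.
have tstarE m k : tstar n ph rate m k = bvec n (ph m) (rate m) k 0 / den M n (ph m) (rate m).
  exact: (Lmx_zstar _ _ _ (Hrate m)).
split; [|split].
- split; [|split; [|split]] => m.
  + exact: (sum_zstar (Hrate m) (Hphi m) n_gt0 HM HK).
  + move=> k; rewrite divr_gt0 ?D_gt0 // (invLmx_mul_gt0 (Hrate m)) // => l.
    exact: (bvec_gt0 (Hrate m) (Hphi m) n_gt0).
  + by move=> k; rewrite tstarE divr_gt0 ?D_gt0 ?(bvec_gt0 (Hrate m) (Hphi m) n_gt0).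
  + move=> k i ki; rewrite -[_ - _]/(tstar n ph rate m i) !tstarE.
    by rewrite ler_pM2r ?invr_gt0 ?D_gt0 ?(bvec_mono (Hrate m) (Hphi m) (ph_mono m) n_gt0).
- move=> zeta theta [sum_zeta [_ [theta_gt0 theta_le]]].
  apply: ler_sum => m _; under eq_bigr do rewrite tstarE.
  by apply: (objective_min (Hrate m) (Hphi m) n_gt0 HM HK (sum_zeta m)) => // k; apply: theta_le.
- by move=> m k; rewrite tstarE (avec_invLmx_mulE (Hrate m)).
Qed.
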